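(* Let $\mathcal{H}$ be any directed hypergraph on $\{1,2,3\}$ and consider any network dynamical system on $\mathcal{H}$ with one-dimensional node states, smooth $F$ and smooth nodeunspecific coupling functions $G_e$ (possibly different for different hyperedges). Then the resulting vector field is not equal to the Guckenheimer--Holmes vector field $$\dot x_1 = x_1 + a x_1^3 + b x_1x_2^2 + c x_1x_3^2,\quad \dot x_2 = x_2 + a x_2^3 + b x_2x_3^2 + c x_1^2x_2,\quad \dot x_3 = x_3 + a x_3^3 + b x_1^2x_3 + c x_2^2x_3$$ for any real $a,b,c$ with $(b,c)\neq(0,0)$. In particular, it cannot be realized for parameters satisfying $a+b+c=-1$, $-\tfrac13<a<0$, $c<a<b<0$.
   Context: A directed hypergraph on $\mathcal{V}=\{1,\dots,N\}$ is a set $\mathcal{E}$ of hyperedges $e=(T(e),H(e))$ with nonempty tail $T(e)\subseteq\mathcal V$ and head $H(e)\subseteq\mathcal V$. A network dynamical system on it is $\dot x_k = F(x_k) + \sum_{e\in\mathcal{E}:\,k\in H(e)} G_e(x_k; x_{T(e)})$ on $\mathbb{R}^N$, with $F:\mathbb R\to\mathbb R$ smooth and each $G_e:\mathbb{R}\times\mathbb{R}^{|T(e)|}\to\mathbb{R}$ smooth, invariant under permutations of its last $|T(e)|$ arguments and depending nontrivially on them. The coupling is nodeunspecific if each $G_e(z;y)$ does not depend on its first argument $z$, i.e. $G_e(x_k;x_{T(e)})=G_e(x_{T(e)})$ (the receiving node may still belong to $T(e)$). *)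

From HB Require Import structures.
From mathcomp Require Import all_boot all_order all_fingroup all_algebra.
From mathcomp Require Import all_classical all_reals topology normedtype derive.
Set Implicit Arguments. Unset Strict Implicit. Unset Printing Implicit Defensive.
Import Order.TTheory GRing.Theory Num.Theory.
Import numFieldNormedType.Exports.
Local Open Scope ring_scope.

Definition iterD {R : realType} {V : normedModType R}
  (l : seq V) (f : V -> R) : V -> R :=
  foldr (fun v g => fun x => derive g x v) f l.

Definition smooth {R : realType} {V : normedModType R} (f : V -> R) : Prop :=
  forall (l : seq V) (x : V), differentiable (iterD l f) x.

(* Hyperedges on the node set {1,2,3} = 'I_3 : pairs (tail, head). *)
Definition hedge := ({set 'I_3} * {set 'I_3})%type.

Definition is_hypergraph (E : {set hedge}) : Prop :=
  forall e, e \in E -> e.1 != finset.set0 /\ e.2 != finset.set0.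

Definition tail_state {R : realType} (e : hedge) (x : 'I_3 -> R)
  : 'rV[R]_#|e.1| := \row_(j < #|e.1|) x (enum_val j).

(* Admissible nodeunspecific coupling function for hyperedge e:
   smooth, invariant under permutations of its |T(e)| arguments,
   and depending nontrivially on its arguments. *)
Definition admissible_coupling {R : realType} (e : hedge)
  (g : 'rV[R]_#|e.1| -> R) : Prop :=
  [/\ smooth g,
      (forall (s : 'S_#|e.1|) (y : 'rV[R]_#|e.1|), g (col_perm s y) = g y) &
      (forall j : 'I_#|e.1|, exists y y' : 'rV[R]_#|e.1|,
          (forall i, i != j -> y ord0 i = y' ord0 i) /\ g y != g y')].

Definition network_vf {R : realType} (E : {set hedge}) (F : R -> R)
  (G : forall e : hedge, 'rV[R]_#|e.1| -> R) (x : 'I_3 -> R) (k : 'I_3) : R :=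
  F (x k) + \sum_(e in E | k \in e.2) G e (tail_state e x).

(* The Guckenheimer--Holmes vector field (node 1,2,3 = ordinals 0,1,2). *)
Definition GH_vf {R : realType} (a b c : R) (x : 'I_3 -> R) (k : 'I_3) : R :=
  let x1 := x (inord 0) in let x2 := x (inord 1) in let x3 := x (inord 2) in
  match val k with
  | 0 => x1 + a * x1 ^+ 3 + b * x1 * x2 ^+ 2 + c * x1 * x3 ^+ 2
  | 1 => x2 + a * x2 ^+ 3 + b * x2 * x3 ^+ 2 + c * x1 ^+ 2 * x2
  | _ => x3 + a * x3 ^+ 3 + b * x1 ^+ 2 * x3 + c * x2 ^+ 2 * x3
  end.

From HB Require Import structures.
From mathcomp Require Import all_boot all_order all_fingroup all_algebra.
From mathcomp Require Import all_classical all_reals topology normedtype derive.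
From mathcomp Require Import ring lra.
Import Order.TTheory GRing.Theory Num.Theory.
Import numFieldNormedType.Exports.
Local Open Scope ring_scope.

(* Fix two distinct nodes i, j and look only at the states
   [pair_state i j p q] (x_i = p, x_j = q, the third node at 0).  Along this
   plane every summand of the network vector field at node i is of one of
   three kinds: F(p) and couplings whose tail misses j depend on p alone,
   couplings whose tail misses i depend on q alone, and couplings whose tail
   contains both i and j are symmetric in (p, q) by permutation invariance.
   The "cyclic antisymmetrization"
       cyc f p q s = (f p q - f q p) + (f q s - f s q) + (f s p - f p s)
   is linear and kills all three kinds, hence kills the network field.
   On the Guckenheimer--Holmes field at node 1 the same expression equals
   b (p - q)(q - s)(s - p) (on the plane of nodes 1, 2), resp.
   c (p - q)(q - s)(s - p) (nodes 1, 3), so a realization forces b = c = 0.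
   Nodeunspecificity (G_e does not see x_k) is exactly what makes the
   coupling terms functions of the tail states only. *)

Definition pair_state {R : realType} (i j : 'I_3) (p q : R) : 'I_3 -> R :=
  fun l => if l == i then p else if l == j then q else 0.

Definition asym {R : realType} (f : R -> R -> R) (p q : R) : R := f p q - f q p.

Definition cyc {R : realType} (f : R -> R -> R) (p q s : R) : R :=
  asym f p q + asym f q s + asym f s p.

Section CyclicAntisymmetrization.
Variable R : realType.

Lemma cyc_ext (f g : R -> R -> R) (p q s : R) :
  (forall p q, f p q = g p q) -> cyc f p q s = cyc g p q s.
Proof. by move=> fg; rewrite /cyc /asym !fg. Qed.

Lemma cyc_sum (I : Type) (r : seq I) (P : pred I) (f : I -> R -> R -> R)
    (p q s : R) :
  cyc (fun p q => \sum_(e <- r | P e) f e p q) p q s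
  = \sum_(e <- r | P e) cyc (f e) p q s.
Proof.
by rewrite /cyc /asym -!sumrB -!big_split.
Qed.

(* [cyc] kills sums u(p) + v(q) + w(p, q) with w symmetric: the
   antisymmetrization is then the coboundary (u - v)(p) - (u - v)(q). *)
Lemma cyc_split_sym (u v : R -> R) (w : R -> R -> R) (f : R -> R -> R) :
  (forall p q, w p q = w q p) ->
  (forall p q, f p q = u p + v q + w p q) ->
  forall p q s, cyc f p q s = 0.
Proof.
move=> wsym fE p q s; rewrite /cyc /asym !fE (wsym q p) (wsym s q) (wsym p s).
by ring.
Qed.

Lemma cyc_add_fst (u : R -> R) (f : R -> R -> R) (p q s : R) :
  cyc (fun p q => u p + f p q) p q s = cyc f p q s.
Proof. by rewrite /cyc /asym; ring. Qed.

Lemma cyc_cross_term (u : R -> R) (k : R) (p q s : R) :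
  cyc (fun p q => u p + k * p * q ^+ 2) p q s = k * ((p - q) * (q - s) * (s - p)).
Proof. by rewrite /cyc /asym; ring. Qed.

End CyclicAntisymmetrization.

Lemma enum_val_tperm (T : finType) (A : {set T}) (i j : T) :
  i \in A -> j \in A ->
  exists s : 'S_#|A|, forall k, enum_val (s k) = tperm i j (enum_val k).
Proof.
move=> iA jA.
have tpermA l : l \in A -> tperm i j l \in A by case: tpermP.
pose f (k : 'I_#|A|) := enum_rank_in iA (tperm i j (enum_val k)).
have fK k : enum_val (f k) = tperm i j (enum_val k).
  by rewrite /f enum_rankK_in // tpermA // enum_valP.
have f_inj : injective f.
  by move=> k1 k2 /(congr1 enum_val); rewrite !fK => /perm_inj /enum_val_inj.
by exists (perm f_inj) => k; rewrite permE.
Qed.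

Section TwoNodeRestriction.
Variables (R : realType) (e : hedge) (g : 'rV[R]_#|e.1| -> R).

Lemma tail_state_ext (x x' : 'I_3 -> R) :
  {in e.1, x =1 x'} -> tail_state e x = tail_state e x'.
Proof. by move=> xx'; apply/rowP => k; rewrite !mxE xx' // enum_valP. Qed.

Lemma coupling_tperm (x : 'I_3 -> R) (i j : 'I_3) :
  (forall (s : 'S_#|e.1|) y, g (col_perm s y) = g y) ->
  i \in e.1 -> j \in e.1 ->
  g (tail_state e (fun l => x (tperm i j l))) = g (tail_state e x).
Proof.
move=> g_sym iT jT; have [s sE] := @enum_val_tperm _ _ _ _ iT jT.
suff -> : tail_state e (fun l => x (tperm i j l)) = col_perm s (tail_state e x).
  exact: g_sym.
by apply/rowP => k; rewrite !mxE sE.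
Qed.

(* Restricted to the (i, j)-plane, a coupling term depends on p alone, on
   q alone, or symmetrically on (p, q); hence [cyc] kills it. *)
Lemma cyc_coupling (i j : 'I_3) (p q s : R) :
  i != j -> (forall (s : 'S_#|e.1|) y, g (col_perm s y) = g y) ->
  cyc (fun p q => g (tail_state e (pair_state i j p q))) p q s = 0.
Proof.
move=> ij g_sym; set t := fun p q => _.
have [iT | iNT] := boolP (i \in e.1); last first.
  apply: (@cyc_split_sym _ (fun=> 0) (t 0) (fun _ _ => 0)) => // p' q'.
  rewrite /t (@tail_state_ext _ (pair_state i j 0 q')) ?add0r ?addr0 //.
  by move=> l lT; rewrite /pair_state; case: eqP => // li; rewrite -li lT in iNT.
have [jT | jNT] := boolP (j \in e.1); last first.
  apply: (@cyc_split_sym _ (t^~ 0) (fun=> 0) (fun _ _ => 0)) => // p' q'.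
  rewrite /t (@tail_state_ext _ (pair_state i j p' 0)) ?addr0 //.
  move=> l lT; rewrite /pair_state; case: eqP => // _.
  by case: eqP => // lj; rewrite -lj lT in jNT.
apply: (@cyc_split_sym _ (fun=> 0) (fun=> 0) t) => [p' q'|p' q']; last first.
  by rewrite !add0r.
rewrite /t -(@coupling_tperm _ i j g_sym iT jT); congr (g _); apply: tail_state_ext.
move=> l _; rewrite /pair_state.
case: tpermP => [->|->|/eqP/negbTE-> /eqP/negbTE->] //;
  by rewrite !eqxx // eq_sym (negbTE ij).
Qed.

End TwoNodeRestriction.

(* Along the (i, j)-plane the network field at node i is killed by [cyc]:
   F contributes a function of p alone, and every coupling term is killed. *)
Lemma cyc_network (R : realType) (E : {set hedge}) (F : R -> R)
    (G : forall e : hedge, 'rV[R]_#|e.1| -> R) (i j : 'I_3) (p q s : R) :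
  i != j -> (forall e, e \in E -> admissible_coupling (G e)) ->
  cyc (fun p q => network_vf E F G (pair_state i j p q) i) p q s = 0.
Proof.
move=> ij adm.
have -> : cyc (fun p q => network_vf E F G (pair_state i j p q) i) p q s
  = cyc (fun p q => F p + \sum_(e in E | i \in e.2)
                          G e (tail_state e (pair_state i j p q))) p q s.
  by rewrite /cyc /asym /network_vf /pair_state !eqxx.
rewrite cyc_add_fst cyc_sum; apply: big1 => e /andP[eE _].
have [_ G_sym _] := adm e eE; exact: cyc_coupling.
Qed.

Lemma GH_node1 (R : realType) (a b c : R) (x : 'I_3 -> R) :
  GH_vf a b c x (inord 0) = x (inord 0) + a * x (inord 0) ^+ 3
    + b * x (inord 0) * x (inord 1) ^+ 2 + c * x (inord 0) * x (inord 2) ^+ 2.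
Proof. by rewrite /GH_vf; have -> : val (inord 0 : 'I_3) = 0%N by exact: inordK. Qed.

Lemma inord3_eq (m n : nat) :
  (m < 3)%N -> (n < 3)%N -> ((inord m : 'I_3) == inord n) = (m == n).
Proof. by move=> m3 n3; rewrite -(inj_eq val_inj) /= !inordK. Qed.

Lemma GH_plane12 (R : realType) (a b c p q : R) :
  GH_vf a b c (pair_state (inord 0) (inord 1) p q) (inord 0)
  = (p + a * p ^+ 3) + b * p * q ^+ 2.
Proof. by rewrite GH_node1 /pair_state !inord3_eq //=; ring. Qed.

Lemma GH_plane13 (R : realType) (a b c p q : R) :
  GH_vf a b c (pair_state (inord 0) (inord 2) p q) (inord 0)
  = (p + a * p ^+ 3) + c * p * q ^+ 2.
Proof. by rewrite GH_node1 /pair_state !inord3_eq //=; ring. Qed.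

(* A realization forces both cross coefficients to vanish: comparing [cyc] at
   (1, 2, 0) of both sides in the plane of node 1 and node j gives 2 k = 0. *)
Lemma realization_forces_bc0 (R : realType) (E : {set hedge}) (F : R -> R)
    (G : forall e : hedge, 'rV[R]_#|e.1| -> R) (a b c : R) :
  (forall e, e \in E -> admissible_coupling (G e)) ->
  (forall (x : 'I_3 -> R) (k : 'I_3), network_vf E F G x k = GH_vf a b c x k) ->
  b = 0 /\ c = 0.
Proof.
move=> adm realizes.
have cross_coef (j : 'I_3) (k : R) : inord 0 != j ->
    (forall p q, GH_vf a b c (pair_state (inord 0) j p q) (inord 0)
                 = (p + a * p ^+ 3) + k * p * q ^+ 2) -> k = 0.
  move=> j0 GH_j; have := @cyc_network _ E F G _ _ 1 2 0 j0 adm.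
  rewrite (@cyc_ext _ _ (fun p q => (p + a * p ^+ 3) + k * p * q ^+ 2));
    last by move=> p q; rewrite realizes GH_j.
  rewrite cyc_cross_term; lra.
split.
- by apply: (cross_coef (inord 1)); [rewrite inord3_eq | exact: GH_plane12].
- by apply: (cross_coef (inord 2)); [rewrite inord3_eq | exact: GH_plane13].
Qed.

Theorem mainTheorem3 (R : realType) (E : {set hedge}) (F : R -> R)
  (G : forall e : hedge, 'rV[R]_#|e.1| -> R) :
  is_hypergraph E ->
  smooth F ->
  (forall e, e \in E -> admissible_coupling (G e)) ->
  (forall a b c : R, (b, c) != (0, 0) ->
     ~ (forall (x : 'I_3 -> R) (k : 'I_3), network_vf E F G x k = GH_vf a b c x k)) /\
  (forall a b c : R, a + b + c = -1 -> - (1 / 3) < a -> a < 0 -> c < a -> a < b -> b < 0 ->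
     ~ (forall (x : 'I_3 -> R) (k : 'I_3), network_vf E F G x k = GH_vf a b c x k)).
Proof.
move=> _ _ adm.
have no_realization (a b c : R) : (b, c) != (0, 0) ->
    ~ (forall x k, network_vf E F G x k = GH_vf a b c x k).
  move=> bc_nz /(@realization_forces_bc0 _ E F G a b c adm) [b0 c0].
  by rewrite b0 c0 eqxx in bc_nz.
split; first exact: no_realization.
move=> a b c _ _ _ _ _ b_neg; apply: no_realization.
by apply: contraTneq b_neg => -[-> _]; rewrite ltxx.
Qed.
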